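(* Let $\varphi:S^1\to S^1$ be a minimal orientation preserving circle homeomorphism with irrational rotation number $\varrho$, and fix $\varepsilon>0$. Then there exists a neighbourhood $U$ of $\varphi$ in $C^0(S^1)$ such that for every minimal orientation preserving circle homeomorphism $\tilde\varphi\in U$ with $\varrho(\tilde\varphi)=\varrho$ we have $$\sup_{x_0\in\mathbb{R}}\sup_{n\in\mathbb{N}}|r_n(x_0)-\tilde r_n(x_0)|<\varepsilon,$$ where $r_n(x_0)=\frac12|\mathrm{cosec}(\pi(\Phi^n(x_0)-\Phi^{n-1}(x_0)))|$ and $\tilde r_n(x_0)=\frac12|\mathrm{cosec}(\pi(\tilde\Phi^n(x_0)-\tilde\Phi^{n-1}(x_0)))|$ are the local discrete radii of curvature of the curlicues generated at $x_0$ by lifts $\Phi$ of $\varphi$ and $\tilde\Phi$ of $\tilde\varphi$, respectively.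
   Context: Identify $S^1=\mathbb{R}/\mathbb{Z}$ via $x\mapsto\exp(2\pi\imath x)$; a lift is $\Phi$ with $\Phi(x+1)=\Phi(x)+1$ projecting to the homeomorphism. The curlicue generated at $x_0$ has vertices $z_0=0$, $z_n=\sum_{k=0}^{n-1}\exp(2\pi\imath\Phi^k(x_0))$; its local discrete radius of curvature $r_n$ is the radius of the circle through $z_{n-1},z_n,z_{n+1}$, which equals the formula above and does not depend on the choice of lift. $C^0(S^1)$ carries the uniform topology. *)

From Stdlib Require Import Reals ZArith.
Open Scope R_scope.

Definition iter (Phi : R -> R) (n : nat) (x : R) : R := Nat.iter n Phi x.

(* Phi is a lift of an orientation preserving circle homeomorphism
   (S^1 = R/Z): continuous, strictly increasing, Phi(x+1) = Phi(x)+1. *)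
Definition circle_lift (Phi : R -> R) : Prop :=
  continuity Phi /\
  (forall x y, x < y -> Phi x < Phi y) /\
  (forall x, Phi (x + 1) = Phi x + 1).

(* The (full, two-sided) orbit of the circle point [x] under the homeomorphism
   with lift Phi contains the circle point [y] iff some forward iterates of x
   and y agree modulo Z. *)
Definition in_orbit (Phi : R -> R) (x y : R) : Prop :=
  exists (n m : nat) (k : Z), iter Phi n y = iter Phi m x + IZR k.

(* Minimality: every orbit is dense in S^1, i.e. the lifted orbit
   (orbit + Z) is dense in R. *)
Definition minimal (Phi : R -> R) : Prop :=
  forall x z eps, 0 < eps -> exists y, in_orbit Phi x y /\ Rabs (y - z) < eps.

(* rho is (a real representative of) the rotation number of the lift Phi *)
Definition is_rotation_number (Phi : R -> R) (rho : R) : Prop :=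
  forall x, Un_cv (fun n => (iter Phi n x - x) / INR n) rho.

Definition irrational (r : R) : Prop :=
  forall p q : Z, q <> 0%Z -> r * IZR q <> IZR p.

Definition circ_dist (a b : R) : R :=
  let d := b - a in Rmin (d - IZR (Int_part d)) (1 - (d - IZR (Int_part d))).

Definition C0_close (Phi Psi : R -> R) (delta : R) : Prop :=
  exists c, c < delta /\ forall x, circ_dist (Phi x) (Psi x) <= c.

Definition radius (Phi : R -> R) (n : nat) (x0 : R) : R :=
  / 2 * Rabs (/ sin (PI * (iter Phi n x0 - iter Phi (n - 1) x0))).

From Pilot Require Import Defs.
From Stdlib Require Import Reals ZArith.
From Stdlib Require Import Lra Lia Classical ClassicalEpsilon.
(* Re-import so that [iter] is [Defs.iter] and not the [iter] of ZArith. *)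
Import Defs.
Open Scope R_scope.

(* Up to replacing the lift of Psi by an integer translate, Phi and Psi are C^0-close lifts with
   the same irrational rotation number rho. For such a lift the points L^a x + b of any orbit are
   ordered on the line exactly as the numbers a rho + b. By minimality and compactness, every
   Phi-orbit comes eta-close (mod 1) to every point within a bounded number N of steps; for Psi
   close to Phi the first N iterates of Phi and Psi are eta-close, and the order argument then
   traps Psi^n x near Phi^n x for every n. The displacement Phi y - y is continuous,
   periodic and never an integer, so |sin (pi (Phi y - y))| is bounded below and
   r_n = 1 / (2 |sin (pi (Phi^n x - Phi^(n-1) x))|) depends uniformly continuously on the
   displacement at Phi^(n-1) x. *)

Lemma Rabs_le_inv x b : Rabs x <= b -> - b <= x <= b.
Proof.
  intro H. pose proof (Rle_abs x); pose proof (Rle_abs (- x)). rewrite Rabs_Ropp in *. lra.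
Qed.

Lemma periodic_shift_Z (f : R -> R) :
  (forall x, f (x + 1) = f x) -> forall z x, f (x + IZR z) = f x.
Proof.
  intros Hf z; induction z as [|z IH|z IH] using Z.peano_ind; intro x.
  - now rewrite Rplus_0_r.
  - now rewrite succ_IZR, <- Rplus_assoc, Hf.
  - rewrite <- (IH x), <- Hf, <- Z.sub_1_r, minus_IZR. f_equal. ring.
Qed.

Lemma root_of_sign_change f a b : continuity f -> f a <= 0 -> 0 <= f b ->
  exists z, f z = 0.
Proof.
  intros Hc Ha Hb. assert (H : f a * f b <= 0) by nra. destruct (Rle_dec a b).
  - destruct (IVT_cor f a b Hc r H) as [z [_ Hz]]; eauto.
  - rewrite Rmult_comm in H. destruct (IVT_cor f b a Hc ltac:(lra) H) as [z [_ Hz]]; eauto.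
Qed.

Lemma continuity_nonvanishing_sign f : continuity f -> (forall y, f y <> 0) ->
  (forall y, 0 < f y) \/ (forall y, f y < 0).
Proof.
  intros Hc Hnz. destruct (Rlt_or_le 0 (f 0)) as [h|h]; [left|right]; intro y.
  - destruct (Rlt_or_le 0 (f y)) as [h'|h']; auto.
    destruct (root_of_sign_change f y 0 Hc h' (Rlt_le _ _ h)) as [z Hz]. now destruct (Hnz z).
  - destruct (Rlt_or_le (f y) 0) as [h'|h']; auto.
    destruct (root_of_sign_change f 0 y Hc h h') as [z Hz]. now destruct (Hnz z).
Qed.

Lemma periodic_continuity_min g : continuity g -> (forall y, g (y + 1) = g y) ->
  exists y0, forall y, g y0 <= g y.
Proof.
  intros Hc Hp. destruct (continuity_ab_min g 0 1 ltac:(lra) (fun c _ => Hc c)) as [m [Hm _]].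
  exists m. intro y. destruct (base_Int_part y).
  replace (g y) with (g (y - IZR (Int_part y)))
    by (rewrite <- (periodic_shift_Z g Hp (Int_part y)); f_equal; ring).
  apply Hm. lra.
Qed.

Definition near (x : R) (P : R -> Prop) : Prop :=
  exists d, 0 < d /\ forall y, Rabs (y - x) < d -> P y.

Lemma continuity_near f x eps : continuity f -> 0 < eps ->
  near x (fun y => Rabs (f y - f x) < eps).
Proof.
  intros Hc He. destruct (Hc x eps He) as [d [Hd H]].
  exists d; split; auto. intros y Hy.
  destruct (Req_dec y x) as [->|ne].
  - unfold Rminus; now rewrite Rplus_opp_r, Rabs_R0.
  - apply (H y). split; [split; [exact I|auto]|exact Hy].
Qed.

Lemma near_forall_le (Q : nat -> R -> Prop) x K :
  (forall l, (l <= K)%nat -> near x (Q l)) ->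
  near x (fun y => forall l, (l <= K)%nat -> Q l y).
Proof.
  induction K as [|K IH]; intro H.
  - destruct (H 0%nat (le_n 0)) as [d [Hd Hy]]. exists d; split; auto.
    intros y Hxy l Hl. replace l with 0%nat by lia. auto.
  - destruct (IH (fun l Hl => H l ltac:(lia))) as [d1 [Hd1 H1]].
    destruct (H (S K) (le_n _)) as [d2 [Hd2 H2]].
    exists (Rmin d1 d2). split; [now apply Rmin_pos|].
    intros y Hy l Hl. pose proof (Rmin_l d1 d2); pose proof (Rmin_r d1 d2).
    destruct (Nat.eq_dec l (S K)) as [->|ne]; [apply H2; lra|apply H1; [lra|lia]].
Qed.

Lemma exists_bound_forall_le (Q : nat -> nat -> Prop) :
  (forall l N N', (N <= N')%nat -> Q l N -> Q l N') ->
  (forall l, exists N, Q l N) -> forall K, exists N, forall l, (l <= K)%nat -> Q l N.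
Proof.
  intros Hmono Hex K; induction K as [|K [N HN]].
  - destruct (Hex 0%nat) as [N HN]. exists N. intros l Hl. now replace l with 0%nat by lia.
  - destruct (Hex (S K)) as [N' HN']. exists (Nat.max N N'). intros l Hl.
    destruct (Nat.eq_dec l (S K)) as [->|ne].
    + apply (Hmono _ N'); auto; lia.
    + apply (Hmono _ N); [lia|]. apply HN; lia.
Qed.

Lemma unit_interval_uniform (P : nat -> R -> Prop) :
  (forall N N' x, (N <= N')%nat -> P N x -> P N' x) ->
  (forall x, exists N, near x (P N)) ->
  exists N, forall x, 0 <= x <= 1 -> P N x.
Proof.
  intros Hmono Hloc. apply NNPP; intro Hn.
  assert (Hbad : forall N, exists x, 0 <= x <= 1 /\ ~ P N x).
  { intro N. apply NNPP; intro H. apply Hn. exists N. intros x Hx.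
    apply NNPP; intro H'. apply H. now exists x. }
  destruct (choice _ Hbad) as [u Hu].
  destruct (Bolzano_Weierstrass u (fun c => 0 <= c <= 1) (compact_P3 0 1)
     (fun N => proj1 (Hu N))) as [l Hl].
  destruct (Hloc l) as [N0 [d [Hd Hnear]]].
  destruct (Hl (disc l (mkposreal d Hd)) N0) as [p [Hp Hv]].
  { exists (mkposreal d Hd). intros y H; exact H. }
  apply (proj2 (Hu p)). apply (Hmono N0); auto.
Qed.

Lemma floor_nat_mult a t : 0 <= a -> 0 < t -> exists k : nat, INR k * t <= a < INR (S k) * t.
Proof.
  intros Ha Ht. destruct (base_Int_part (a / t)) as [h1 h2].
  assert (0 <= a / t) by (unfold Rdiv; apply Rmult_le_pos; [lra|left; apply Rinv_0_lt_compat; lra]).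
  assert (Hz : (-1 < Int_part (a / t))%Z) by (apply lt_IZR; lra).
  exists (Z.to_nat (Int_part (a / t))). rewrite S_INR, INR_IZR_INZ, Z2Nat.id by lia.
  replace a with (a / t * t) at 2 3 by (field; lra).
  split; [apply Rmult_le_compat_r|apply Rmult_lt_compat_r]; lra.
Qed.

Lemma grid_approx M z : (0 < M)%nat ->
  exists (l : nat) (b : Z), (l <= M)%nat /\ 0 <= z - (INR l / INR M + IZR b) < / INR M.
Proof.
  intros HM0. assert (HM : 0 < INR M) by (apply lt_0_INR; lia).
  destruct (base_Int_part z).
  destruct (floor_nat_mult (z - IZR (Int_part z)) (/ INR M)) as [l [Hl1 Hl2]];
    [lra|apply Rinv_0_lt_compat; lra|].
  rewrite S_INR in Hl2. exists l, (Int_part z). split; [|unfold Rdiv; lra].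
  enough (Hlt : INR l < INR M) by (apply INR_lt in Hlt; lia).
  apply (Rmult_lt_reg_r (/ INR M)); [apply Rinv_0_lt_compat; lra|].
  rewrite Rinv_r by lra. lra.
Qed.

Lemma abs_sign_decomp x :
  exists s : Z, Rabs (IZR s) = 1 /\ IZR s * IZR s = 1 /\ x = IZR s * Rabs x.
Proof.
  destruct (Rle_or_lt 0 x) as [h|h].
  - exists 1%Z. rewrite (Rabs_pos_eq x), Rabs_R1 by lra.
    repeat split; ring.
  - exists (-1)%Z. rewrite (Rabs_left x), (Rabs_left (IZR (-1))) by lra.
    repeat split; ring.
Qed.

Lemma nat_multiples_dense_mod1 t T : 0 < t ->
  exists (k : nat) (j : Z), Rabs (INR k * t + IZR j - T) < t.
Proof.
  intros Ht. destruct (base_Int_part T) as [h1 h2].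
  destruct (floor_nat_mult (T - IZR (Int_part T)) t ltac:(lra) Ht) as [k [Hk1 Hk2]].
  exists k, (Int_part T). rewrite S_INR in Hk2. apply Rabs_def1; lra.
Qed.

Section Irrational_approximation.

Variable rho : R.
Hypothesis Hirr : irrational rho.

Lemma irrational_mult_sub_neq0 q p : (1 <= q)%nat -> INR q * rho - IZR p <> 0.
Proof.
  intros Hq E. apply (Hirr p (Z.of_nat q)); [lia|]. rewrite <- INR_IZR_INZ. lra.
Qed.

Lemma irrational_shift z : irrational (rho + IZR z).
Proof.
  intros p q Hq E. apply (Hirr (p - z * q)%Z q Hq). rewrite minus_IZR, mult_IZR. lra.
Qed.

Lemma irrational_between_integers : exists j : Z, IZR j < rho < IZR j + 1.
Proof.
  exists (Int_part rho). destruct (base_Int_part rho) as [[h|h] h2]; [lra|].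
  exfalso. apply (Hirr (Int_part rho) 1%Z); [lia|]. rewrite h; ring.
Qed.

(* With t = |q rho - p| and m = floor (1 / t), one of the errors 1 - m t and (m + 1) t - 1 of
   the multiples m q and (m + 1) q is at most t / 2. *)
Lemma approx_halve q p : (1 <= q)%nat -> Rabs (INR q * rho - IZR p) < 1 ->
  exists q' p', (1 <= q')%nat /\
    Rabs (INR q' * rho - IZR p') <= Rabs (INR q * rho - IZR p) / 2.
Proof.
  intros Hq Ht1. set (t := Rabs (INR q * rho - IZR p)) in *.
  assert (Ht0 : 0 < t) by (apply Rabs_pos_lt, irrational_mult_sub_neq0; auto).
  destruct (abs_sign_decomp (INR q * rho - IZR p)) as [s [Hs [_ Es]]]. fold t in Es.
  assert (Hk : forall k : nat, Rabs (INR (k * q) * rho - IZR (Z.of_nat k * p + s))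
                               = Rabs (INR k * t - 1)).
  { intro k. rewrite mult_INR, plus_IZR, mult_IZR, <- INR_IZR_INZ.
    assert (E : INR k * INR q * rho - (INR k * IZR p + IZR s) = IZR s * (INR k * t - 1)).
    { transitivity (INR k * (INR q * rho - IZR p) - IZR s); [ring|]. rewrite Es; ring. }
    now rewrite E, Rabs_mult, Hs, Rmult_1_l. }
  destruct (floor_nat_mult 1 t ltac:(lra) Ht0) as [m [Hm1 Hm2]].
  assert (Hm : (1 <= m)%nat) by (destruct m; [simpl in Hm2; lra|lia]).
  rewrite S_INR in Hm2.
  destruct (Rle_dec (1 - INR m * t) (t / 2)).
  - exists (m * q)%nat, (Z.of_nat m * p + s)%Z. split; [nia|].
    rewrite Hk, Rabs_minus_sym, Rabs_pos_eq; lra.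
  - exists (S m * q)%nat, (Z.of_nat (S m) * p + s)%Z. split; [nia|].
    rewrite Hk, S_INR, Rabs_pos_eq; lra.
Qed.

Lemma approx_small eps : 0 < eps ->
  exists q p, (1 <= q)%nat /\ Rabs (INR q * rho - IZR p) < eps.
Proof.
  intros He. destruct irrational_between_integers as [j Hj].
  set (t0 := rho - IZR j).
  assert (Hk : forall k, exists q p, (1 <= q)%nat /\
                 Rabs (INR q * rho - IZR p) <= t0 / 2 ^ k).
  { induction k as [|k [q [p [Hq Hb]]]].
    - exists 1%nat, j. split; [lia|]. simpl. rewrite Rmult_1_l, Rabs_pos_eq; unfold t0; lra.
    - assert (t0 / 2 ^ k <= t0).
      { unfold Rdiv. rewrite <- (Rmult_1_r t0) at 2. apply Rmult_le_compat_l; [unfold t0; lra|].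
        rewrite <- Rinv_1. apply Rinv_le_contravar; [lra|apply pow_R1_Rle; lra]. }
      destruct (approx_halve q p Hq ltac:(unfold t0 in *; lra)) as [q' [p' [Hq' Hb']]].
      exists q', p'. split; auto. simpl. replace (t0 / (2 * 2 ^ k)) with (t0 / 2 ^ k / 2)
        by (field; apply pow_nonzero; lra). lra. }
  destruct (cv_pow_half t0 eps He) as [N HN].
  specialize (HN N (le_n N)). unfold R_dist in HN. rewrite Rminus_0_r in HN.
  destruct (Hk N) as [q [p [Hq Hb]]]. exists q, p. split; auto.
  pose proof (Rle_abs (t0 / 2 ^ N)). lra.
Qed.

Lemma rotation_dense T eps : 0 < eps ->
  exists (i : nat) (j : Z), Rabs (INR i * rho + IZR j - T) < eps.
Proof.
  intros He. destruct (approx_small eps He) as [q [p [Hq Heps]]].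
  set (t := Rabs (INR q * rho - IZR p)) in *.
  assert (Ht0 : 0 < t) by (apply Rabs_pos_lt, irrational_mult_sub_neq0; auto).
  destruct (abs_sign_decomp (INR q * rho - IZR p)) as [s [Hs [Hs2 Es]]]. fold t in Es.
  destruct (nat_multiples_dense_mod1 t (IZR s * T) Ht0) as [k [j Hkj]].
  exists (k * q)%nat, (s * j - Z.of_nat k * p)%Z.
  rewrite mult_INR, minus_IZR, !mult_IZR, <- INR_IZR_INZ.
  assert (E : INR k * INR q * rho + (IZR s * IZR j - INR k * IZR p) - T
              = IZR s * (INR k * t + IZR j - IZR s * T)).
  { transitivity (INR k * (INR q * rho - IZR p) + IZR s * IZR j - 1 * T); [ring|].
    rewrite Es, <- Hs2. ring. }
  rewrite E, Rabs_mult, Hs. lra.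
Qed.

End Irrational_approximation.

Lemma iter_add (f : R -> R) a b x : iter f (a + b) x = iter f a (iter f b x).
Proof. unfold iter. apply Nat.iter_add. Qed.

Lemma iter_mul_le (f : R -> R) q a : (forall y, iter f q y - y <= a) ->
  forall k y, iter f (k * q) y - y <= INR k * a.
Proof.
  intros H k y; induction k as [|k IH].
  - simpl. lra.
  - rewrite S_INR, Nat.mul_succ_l, Nat.add_comm, iter_add.
    specialize (H (iter f (k * q) y)). lra.
Qed.

Lemma iter_mul_ge (f : R -> R) q a : (forall y, a <= iter f q y - y) ->
  forall k y, INR k * a <= iter f (k * q) y - y.
Proof.
  intros H k y; induction k as [|k IH].
  - simpl. lra.
  - rewrite S_INR, Nat.mul_succ_l, Nat.add_comm, iter_add.
    specialize (H (iter f (k * q) y)). lra.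
Qed.

Definition orbit_visits (f : R -> R) (N : nat) (eta w x : R) : Prop :=
  exists i, (i <= N)%nat /\ exists j : Z, Rabs (iter f i x + IZR j - w) < eta.

Lemma orbit_visits_mono f N N' eta w x : (N <= N')%nat ->
  orbit_visits f N eta w x -> orbit_visits f N' eta w x.
Proof. intros HN [i [Hi Hj]]. exists i. split; [lia|exact Hj]. Qed.

Lemma orbit_visits_weaken f N eta eta' w w' x : Rabs (w' - w) + eta <= eta' ->
  orbit_visits f N eta w x -> orbit_visits f N eta' w' x.
Proof.
  intros Hw [i [Hi [j Hj]]]. exists i. split; auto. exists j.
  pose proof (Rabs_le_inv _ _ (Rle_refl (Rabs (w' - w)))).
  apply Rabs_def2 in Hj. apply Rabs_def1; lra.
Qed.

Section Lift.

Variable L : R -> R.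
Hypothesis HL : circle_lift L.

Lemma lift_shift_Z z x : L (x + IZR z) = L x + IZR z.
Proof.
  destruct HL as [_ [_ Hper]].
  assert (Hdisp : forall y, L (y + 1) - (y + 1) = L y - y) by (intro y; rewrite Hper; ring).
  pose proof (periodic_shift_Z (fun y => L y - y) Hdisp z x) as H. simpl in H. lra.
Qed.

Lemma iter_shift_Z n z x : iter L n (x + IZR z) = iter L n x + IZR z.
Proof.
  induction n as [|n IH]; [reflexivity|].
  simpl. rewrite IH. apply lift_shift_Z.
Qed.

Lemma iter_continuity n : continuity (iter L n).
Proof.
  induction n as [|n IH].
  - exact (derivable_continuous _ derivable_id).
  - exact (continuity_comp (iter L n) L IH (proj1 HL)).
Qed.

Lemma iter_increasing n x y : x < y -> iter L n x < iter L n y.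
Proof.
  induction n as [|n IH]; intro H; [exact H|].
  apply (proj1 (proj2 HL)), IH, H.
Qed.

Lemma iter_lt_iff n x y : iter L n x < iter L n y <-> x < y.
Proof.
  split; [|apply iter_increasing]. intro H.
  destruct (Rtotal_order x y) as [h|[->|h]]; auto;
    [|apply (iter_increasing n) in h]; lra.
Qed.

Lemma iter_mul_eq q p y : iter L q y - y = IZR p ->
  forall k, iter L (k * q) y - y = INR k * IZR p.
Proof.
  intros H k; induction k as [|k IH].
  - simpl. lra.
  - rewrite S_INR, Nat.mul_succ_l, Nat.add_comm, iter_add.
    replace (iter L (k * q) y) with (y + IZR (Z.of_nat k * p))
      by (rewrite mult_IZR, <- INR_IZR_INZ; lra).
    rewrite iter_shift_Z, mult_IZR, <- INR_IZR_INZ. lra.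
Qed.

Lemma orbit_visits_shift_Z N eta w x a b :
  orbit_visits L N eta w x -> orbit_visits L N eta (w + IZR b) (x + IZR a).
Proof.
  intros [i [Hi [j Hj]]]. exists i. split; auto. exists (j - a + b)%Z.
  rewrite iter_shift_Z, plus_IZR, minus_IZR.
  now replace (iter L i x + IZR a + (IZR j - IZR a + IZR b) - (w + IZR b))
    with (iter L i x + IZR j - w) by ring.
Qed.

Lemma lift_unif_cont eps : 0 < eps ->
  exists d, 0 < d /\ forall u v, Rabs (u - v) < d -> Rabs (L u - L v) < eps.
Proof.
  intros He.
  destruct (Heine L (fun c => -1 <= c <= 2) (compact_P3 (-1) 2)
              (fun x _ => proj1 HL x) (mkposreal eps He)) as [d0 Hd0].
  exists (Rmin d0 1). split; [apply Rmin_pos; [apply cond_pos|lra]|].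
  intros u v Huv. pose proof (Rmin_l d0 1); pose proof (Rmin_r d0 1).
  destruct (base_Int_part u). set (k := Int_part u) in *.
  replace u with ((u - IZR k) + IZR k) by ring.
  replace v with ((v - IZR k) + IZR k) by ring.
  rewrite !lift_shift_Z.
  replace (L (u - IZR k) + IZR k - (L (v - IZR k) + IZR k))
    with (L (u - IZR k) - L (v - IZR k)) by ring.
  apply Rabs_def2 in Huv.
  apply Hd0; simpl; try lra. apply Rabs_def1; lra.
Qed.

Lemma shift_lift m : circle_lift (fun y => L y - IZR m).
Proof.
  destruct HL as [Hc [Hm Hp]]. split; [|split].
  - apply continuity_minus; [exact Hc|apply continuity_const; intros ? ?; reflexivity].
  - intros x y H. specialize (Hm x y H). lra.
  - intro x. rewrite Hp. ring.
Qed.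

Lemma iter_shift_lift m n x :
  iter (fun y => L y - IZR m) n x = iter L n x - INR n * IZR m.
Proof.
  induction n as [|n IH]; [simpl; ring|].
  simpl iter at 1. rewrite IH.
  replace (iter L n x - INR n * IZR m) with (iter L n x + IZR (- (Z.of_nat n * m)))
    by (rewrite opp_IZR, mult_IZR, <- INR_IZR_INZ; ring).
  rewrite lift_shift_Z, opp_IZR, mult_IZR, <- INR_IZR_INZ, S_INR. simpl. ring.
Qed.

Lemma rotation_number_shift_lift m r : is_rotation_number L r ->
  is_rotation_number (fun y => L y - IZR m) (r - IZR m).
Proof.
  intros Hr x eps He. destruct (Hr x eps He) as [N HN].
  exists (Nat.max N 1). intros n Hn. specialize (HN n ltac:(lia)).
  assert (0 < INR n) by (apply lt_0_INR; lia).
  unfold R_dist in *. rewrite iter_shift_lift.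
  replace ((iter L n x - INR n * IZR m - x) / INR n - (r - IZR m))
    with ((iter L n x - x) / INR n - r) by (field; lra). exact HN.
Qed.

End Lift.

Lemma Un_cv_const c : Un_cv (fun _ => c) c.
Proof.
  intros eps He. exists 0%nat. intros n _. unfold R_dist. now rewrite Rminus_diag, Rabs_R0.
Qed.

(* The position, in the orbit of the rotation by rho, of a point y with L^n y = L^m x + k. *)
Definition rotation_coord (rho : R) (n m : nat) (k : Z) : R := (INR m - INR n) * rho + IZR k.

Section Rotation.

Variable L : R -> R.
Variable rho : R.
Hypothesis HL : circle_lift L.
Hypothesis Hrot : is_rotation_number L rho.
Hypothesis Hirr : irrational rho.

Lemma rotation_number_subseq q y : (1 <= q)%nat ->
  Un_cv (fun k => (iter L (S k * q) y - y) / INR (S k)) (INR q * rho).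
Proof.
  intros Hq eps He.
  assert (Hq0 : 0 < INR q) by (apply lt_0_INR; lia).
  destruct (Hrot y (eps / INR q)) as [N HN]; [apply Rdiv_lt_0_compat; lra|].
  exists N. intros k Hk. specialize (HN (S k * q)%nat ltac:(nia)).
  unfold R_dist in *. rewrite mult_INR in HN.
  assert (0 < INR (S k)) by (apply lt_0_INR; lia).
  replace ((iter L (S k * q) y - y) / INR (S k) - INR q * rho)
    with (INR q * ((iter L (S k * q) y - y) / (INR (S k) * INR q) - rho)) by (field; lra).
  rewrite Rabs_mult, Rabs_pos_eq by lra.
  apply (Rmult_lt_compat_l (INR q)) in HN; [|lra].
  replace (INR q * (eps / INR q)) with eps in HN by (field; lra). exact HN.
Qed.

Lemma rotation_number_le q a y : (1 <= q)%nat ->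
  (forall k, iter L (k * q) y - y <= INR k * a) -> INR q * rho <= a.
Proof.
  intros Hq H.
  refine (Rle_cv_lim _ (rotation_number_subseq q y Hq) (Un_cv_const a)).
  intro k. assert (0 < INR (S k)) by (apply lt_0_INR; lia).
  apply (Rmult_le_reg_r (INR (S k))); [lra|].
  replace (_ / INR (S k) * INR (S k)) with (iter L (S k * q) y - y) by (field; lra).
  rewrite Rmult_comm. apply H.
Qed.

Lemma rotation_number_ge q a y : (1 <= q)%nat ->
  (forall k, INR k * a <= iter L (k * q) y - y) -> a <= INR q * rho.
Proof.
  intros Hq H.
  refine (Rle_cv_lim _ (Un_cv_const a) (rotation_number_subseq q y Hq)).
  intro k. assert (0 < INR (S k)) by (apply lt_0_INR; lia).
  apply (Rmult_le_reg_r (INR (S k))); [lra|].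
  replace (_ / INR (S k) * INR (S k)) with (iter L (S k * q) y - y) by (field; lra).
  rewrite Rmult_comm. apply H.
Qed.

Lemma no_periodic_orbit q p y : (1 <= q)%nat -> iter L q y - y <> IZR p.
Proof.
  intros Hq E. pose proof (iter_mul_eq L HL q p y E) as Hk.
  apply (irrational_mult_sub_neq0 rho Hirr q p Hq).
  pose proof (rotation_number_le q (IZR p) y Hq (fun k => Req_le _ _ (Hk k))).
  pose proof (rotation_number_ge q (IZR p) y Hq (fun k => Req_le _ _ (eq_sym (Hk k)))).
  lra.
Qed.

Lemma iter_displacement_sign q p : (1 <= q)%nat ->
  (forall y, IZR p < iter L q y - y) \/ (forall y, iter L q y - y < IZR p).
Proof.
  intros Hq.
  destruct (continuity_nonvanishing_sign (fun y => iter L q y - y - IZR p)) as [H|H].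
  - apply continuity_minus; [apply continuity_minus|apply continuity_const; now intros ? ?].
    + apply iter_continuity, HL.
    + apply derivable_continuous, derivable_id.
  - intros y E. apply (no_periodic_orbit q p y Hq). lra.
  - left; intro y; specialize (H y); lra.
  - right; intro y; specialize (H y); lra.
Qed.

Lemma iter_displacement_gt q p y : IZR p < INR q * rho -> IZR p < iter L q y - y.
Proof.
  intros H. destruct q as [|q]; [simpl in *; lra|].
  destruct (iter_displacement_sign (S q) p ltac:(lia)) as [Hgt|Hlt]; [apply Hgt|exfalso].
  assert (INR (S q) * rho <= IZR p); [|lra].
  apply (rotation_number_le (S q) (IZR p) y ltac:(lia)).
  intro k. apply iter_mul_le. intro y'. left. apply Hlt.
Qed.

Lemma iter_displacement_lt q p y : INR q * rho < IZR p -> iter L q y - y < IZR p.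
Proof.
  intros H. destruct q as [|q]; [simpl in *; lra|].
  destruct (iter_displacement_sign (S q) p ltac:(lia)) as [Hgt|Hlt]; [exfalso|apply Hlt].
  assert (IZR p <= INR (S q) * rho); [|lra].
  apply (rotation_number_ge (S q) (IZR p) y ltac:(lia)).
  intro k. apply iter_mul_ge. intro y'. left. apply Hgt.
Qed.

Lemma orbit_order_lt a b c d x : INR a * rho + IZR b < INR c * rho + IZR d ->
  iter L a x + IZR b < iter L c x + IZR d.
Proof.
  intros H. destruct (le_lt_dec a c) as [h|h].
  - replace c with ((c - a) + a)%nat by lia. rewrite iter_add.
    pose proof (iter_displacement_gt (c - a) (b - d) (iter L a x)) as G.
    rewrite minus_INR, !minus_IZR in G by lia. specialize (G ltac:(lra)). lra.
  - replace a with ((a - c) + c)%nat by lia. rewrite iter_add.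
    pose proof (iter_displacement_lt (a - c) (d - b) (iter L c x)) as G.
    rewrite minus_INR, !minus_IZR in G by lia. specialize (G ltac:(lra)). lra.
Qed.

Lemma orbit_order a b c d x :
  iter L a x + IZR b < iter L c x + IZR d <-> INR a * rho + IZR b < INR c * rho + IZR d.
Proof.
  split; [|apply orbit_order_lt]. intros H.
  destruct (Rtotal_order (INR a * rho + IZR b) (INR c * rho + IZR d)) as [h|[h|h]]; auto; exfalso.
  - destruct (Z.eq_dec (Z.of_nat a - Z.of_nat c) 0) as [e|ne].
    + assert (a = c) by lia. subst. lra.
    + apply (Hirr (d - b)%Z _ ne). rewrite !minus_IZR, <- !INR_IZR_INZ. lra.
  - apply (orbit_order_lt _ _ _ _ x) in h. lra.
Qed.

Lemma displacement_between_iff j y :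
  IZR j < L y - y < IZR j + 1 <-> IZR j < rho < IZR j + 1.
Proof.
  pose proof (orbit_order 0 j 1 0 y) as E1. pose proof (orbit_order 1 0 0 (j + 1) y) as E2.
  simpl in E1, E2. rewrite plus_IZR in E2.
  split; intros [H1 H2]; split.
  - enough (0 * rho + IZR j < 1 * rho + 0) by lra. apply E1. lra.
  - enough (1 * rho + 0 < 0 * rho + (IZR j + 1)) by lra. apply E2. lra.
  - enough (y + IZR j < L y + 0) by lra. apply E1. lra.
  - enough (L y + 0 < y + (IZR j + 1)) by lra. apply E2. lra.
Qed.

Lemma orbit_points_order n1 m1 k1 y1 n2 m2 k2 y2 x :
  iter L n1 y1 = iter L m1 x + IZR k1 -> iter L n2 y2 = iter L m2 x + IZR k2 ->
  y1 < y2 <-> rotation_coord rho n1 m1 k1 < rotation_coord rho n2 m2 k2.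
Proof.
  intros E1 E2. unfold rotation_coord.
  assert (F1 : iter L (n2 + n1) y1 = iter L (n2 + m1) x + IZR k1)
    by (rewrite !iter_add, E1; apply iter_shift_Z, HL).
  assert (F2 : iter L (n2 + n1) y2 = iter L (n1 + m2) x + IZR k2)
    by (rewrite Nat.add_comm, !iter_add, E2; apply iter_shift_Z, HL).
  rewrite <- (iter_lt_iff L HL (n2 + n1)), F1, F2, orbit_order, !plus_INR. split; lra.
Qed.

Hypothesis Hmin : minimal L.

Lemma forward_orbit_dense x z eta : 0 < eta ->
  exists (i : nat) (j : Z), Rabs (iter L i x + IZR j - z) < eta.
Proof.
  intros He.
  destruct (Hmin x (z - eta / 2) (eta / 2)) as [y1 [[n1 [m1 [k1 E1]]] D1]]; [lra|].
  destruct (Hmin x (z + eta / 2) (eta / 2)) as [y2 [[n2 [m2 [k2 E2]]] D2]]; [lra|].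
  apply Rabs_def2 in D1. apply Rabs_def2 in D2.
  pose proof (proj1 (orbit_points_order _ _ _ y1 _ _ _ y2 x E1 E2) ltac:(lra)) as Hr12.
  set (r1 := rotation_coord rho n1 m1 k1) in *. set (r2 := rotation_coord rho n2 m2 k2) in *.
  destruct (rotation_dense rho Hirr ((r1 + r2) / 2) ((r2 - r1) / 2)) as [i [j Hij]]; [lra|].
  apply Rabs_def2 in Hij.
  assert (E0 : iter L 0 (iter L i x + IZR j) = iter L i x + IZR j) by reflexivity.
  pose proof (orbit_points_order _ _ _ y1 _ _ _ _ x E1 E0) as O1.
  pose proof (orbit_points_order _ _ _ _ _ _ _ y2 x E0 E2) as O2.
  unfold rotation_coord at 2 in O1. unfold rotation_coord at 1 in O2. simpl INR in O1, O2.
  fold r1 in O1. fold r2 in O2.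
  exists i, j. apply Rabs_def1.
  - enough (iter L i x + IZR j < y2) by lra. apply O2. lra.
  - enough (y1 < iter L i x + IZR j) by lra. apply O1. lra.
Qed.

Lemma orbit_visits_near x w eta : 0 < eta -> exists N, near x (orbit_visits L N eta w).
Proof.
  intros He. destruct (forward_orbit_dense x w eta He) as [i [j Hij]].
  destruct (continuity_near (iter L i) x (eta - Rabs (iter L i x + IZR j - w)))
    as [d [Hd Hnear]]; [apply iter_continuity, HL|lra|].
  exists i, d. split; auto. intros y Hy. exists i. split; auto. exists j.
  specialize (Hnear y Hy).
  replace (iter L i y + IZR j - w) with ((iter L i y - iter L i x) + (iter L i x + IZR j - w))
    by ring.
  pose proof (Rabs_triang (iter L i y - iter L i x) (iter L i x + IZR j - w)). lra.
Qed.

Lemma forward_orbit_unif_dense eta : 0 < eta ->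
  exists N, forall x z, orbit_visits L N eta z x.
Proof.
  intros He.
  destruct (floor_nat_mult 1 (eta / 2)) as [k [_ Hk]]; [lra|lra|].
  assert (HM : 0 < INR (S k)) by (apply lt_0_INR; lia).
  assert (Hgrid : / INR (S k) < eta / 2).
  { apply (Rmult_lt_reg_r (INR (S k))); [lra|]. rewrite Rinv_l by lra. lra. }
  destruct (unit_interval_uniform (fun N x => forall l, (l <= S k)%nat ->
              orbit_visits L N (eta / 2) (INR l / INR (S k)) x)) as [N HN].
  - intros N N' x HNN' H l Hl. exact (orbit_visits_mono _ _ _ _ _ _ HNN' (H l Hl)).
  - intro x.
    destruct (exists_bound_forall_le
                (fun l N => near x (orbit_visits L N (eta / 2) (INR l / INR (S k)))))
      with (K := S k) as [N HN].
    + intros l N N' HNN' [d [Hd H]]. exists d. split; auto.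
      intros y Hy. exact (orbit_visits_mono _ _ _ _ _ _ HNN' (H y Hy)).
    + intro l. apply orbit_visits_near. lra.
    + exists N. now apply near_forall_le.
  - exists N. intros x z. destruct (base_Int_part x).
    destruct (grid_approx (S k) z) as [l [b [Hl Hz]]]; [lia|].
    replace x with ((x - IZR (Int_part x)) + IZR (Int_part x)) by ring.
    apply (orbit_visits_weaken _ _ (eta / 2) _ (INR l / INR (S k) + IZR b)).
    + rewrite Rabs_pos_eq; lra.
    + apply orbit_visits_shift_Z, HN; [exact HL|lra|exact Hl].
Qed.

End Rotation.

Lemma iter_close_of_close L N eta : circle_lift L -> 0 < eta ->
  exists d, 0 < d /\ forall Psi, (forall x, Rabs (Psi x - L x) < d) ->
    forall a x, (a <= N)%nat -> Rabs (iter Psi a x - iter L a x) < eta.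
Proof.
  intros HL. revert eta. induction N as [|N IH]; intros eta He.
  - exists 1. split; [lra|]. intros Psi _ a x Ha. replace a with 0%nat by lia.
    simpl. unfold Rminus. now rewrite Rplus_opp_r, Rabs_R0.
  - destruct (lift_unif_cont L HL (eta / 2)) as [d1 [Hd1 Hu]]; [lra|].
    destruct (IH (Rmin (eta / 2) d1)) as [d' [Hd' H']]; [apply Rmin_pos; lra|].
    exists (Rmin d' (eta / 2)). split; [apply Rmin_pos; lra|].
    intros Psi HP a x Ha.
    pose proof (Rmin_l (eta / 2) d1); pose proof (Rmin_r (eta / 2) d1).
    pose proof (Rmin_l d' (eta / 2)); pose proof (Rmin_r d' (eta / 2)).
    assert (HP' : forall x, Rabs (Psi x - L x) < d') by (intro y; specialize (HP y); lra).
    destruct (Nat.eq_dec a (S N)) as [->|ne].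
    + simpl. set (y := iter Psi N x). set (y' := iter L N x).
      assert (Hyy : Rabs (y - y') < Rmin (eta / 2) d1) by (apply H'; auto).
      replace (Psi y - L y') with ((Psi y - L y) + (L y - L y')) by ring.
      pose proof (Rabs_triang (Psi y - L y) (L y - L y')).
      specialize (HP y). assert (Rabs (L y - L y') < eta / 2) by (apply Hu; lra). lra.
    + assert (Rabs (iter Psi a x - iter L a x) < Rmin (eta / 2) d1) by (apply H'; auto; lia).
      lra.
Qed.

(* Both orbits are ordered as the same rotation orbit, so the orbit of Psi is trapped between
   Psi-images of boundedly many Phi-iterates that bracket the Phi-orbit point. *)
Lemma iter_close_same_rotation Phi rho eta :
  circle_lift Phi -> is_rotation_number Phi rho -> irrational rho -> minimal Phi -> 0 < eta ->
  exists d, 0 < d /\ forall Psi, circle_lift Psi -> is_rotation_number Psi rho ->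
    (forall x, Rabs (Psi x - Phi x) < d) ->
    forall n x, Rabs (iter Psi n x - iter Phi n x) < eta.
Proof.
  intros HPhi Hrot Hirr Hmin He.
  destruct (forward_orbit_unif_dense Phi rho HPhi Hrot Hirr Hmin (eta / 4)) as [N HN]; [lra|].
  destruct (iter_close_of_close Phi N (eta / 4) HPhi) as [d [Hd Hc]]; [lra|].
  exists d. split; auto. intros Psi HPsi HrPsi Hclose n x.
  set (P := iter Phi n x).
  destruct (HN x (P - eta / 2)) as [a [Ha [b Hb]]].
  destruct (HN x (P + eta / 2)) as [c [Hc' [e He']]].
  apply Rabs_def2 in Hb. apply Rabs_def2 in He'.
  assert (H1 : iter Phi a x + IZR b < iter Phi n x + IZR 0) by (simpl; unfold P in *; lra).
  assert (H2 : iter Phi n x + IZR 0 < iter Phi c x + IZR e) by (simpl; unfold P in *; lra).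
  apply (orbit_order Phi rho HPhi Hrot Hirr) in H1, H2.
  apply (orbit_order_lt Psi rho HPsi HrPsi Hirr _ _ _ _ x) in H1, H2.
  simpl in H1, H2.
  pose proof (Hc Psi Hclose a x Ha) as Ha'. pose proof (Hc Psi Hclose c x Hc') as Hc''.
  apply Rabs_def2 in Ha'. apply Rabs_def2 in Hc''.
  apply Rabs_def1; unfold P in *; lra.
Qed.

Lemma circ_dist_integer_gap a b c : circ_dist a b <= c ->
  exists m : Z, Rabs (b - a - IZR m) <= c.
Proof.
  unfold circ_dist. cbv zeta. intro H. destruct (base_Int_part (b - a)).
  unfold Rmin in H. destruct (Rle_dec _ _) in H.
  - exists (Int_part (b - a)). rewrite Rabs_pos_eq; lra.
  - exists (Int_part (b - a) + 1)%Z. rewrite plus_IZR. apply Rabs_le. lra.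
Qed.

(* A continuous function within c < 1/2 of the integers everywhere would have to cross a
   half-integer to change its nearest integer. *)
Lemma continuity_near_integers_const D c : continuity D -> c < / 2 ->
  (forall x, exists m : Z, Rabs (D x - IZR m) <= c) ->
  exists m : Z, forall x, Rabs (D x - IZR m) <= c.
Proof.
  intros Hc Hc2 Hnear. destruct (Hnear 0) as [m0 Hm0]. exists m0. intro x.
  destruct (Hnear x) as [mx Hmx]. destruct (Z.eq_dec mx m0) as [<-|ne]; auto. exfalso.
  apply Rabs_le_inv in Hm0, Hmx.
  assert (Hhalf : exists (a : Z) w, D w = IZR a + / 2).
  { destruct (Z_lt_le_dec m0 mx) as [h|h].
    - assert (IZR m0 + 1 <= IZR mx) by (rewrite <- plus_IZR; apply IZR_le; lia).
      destruct (root_of_sign_change (fun y => D y - (IZR m0 + / 2)) 0 x) as [w Hw];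
        [apply continuity_minus; [exact Hc|apply continuity_const; now intros ? ?]|lra|lra|].
      exists m0, w. lra.
    - assert (IZR mx + 1 <= IZR m0) by (rewrite <- plus_IZR; apply IZR_le; lia).
      destruct (root_of_sign_change (fun y => D y - (IZR m0 - / 2)) x 0) as [w Hw];
        [apply continuity_minus; [exact Hc|apply continuity_const; now intros ? ?]|lra|lra|].
      exists (m0 - 1)%Z, w. rewrite minus_IZR. lra. }
  destruct Hhalf as [a [w Hw]]. destruct (Hnear w) as [mw Hmw].
  rewrite Hw in Hmw. apply Rabs_le_inv in Hmw.
  destruct (Z_lt_le_dec a mw) as [h|h].
  - assert (IZR a + 1 <= IZR mw) by (rewrite <- plus_IZR; apply IZR_le; lia). lra.
  - assert (IZR mw <= IZR a) by (apply IZR_le; lia). lra.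
Qed.

Lemma C0_close_same_rotation Phi rho :
  circle_lift Phi -> is_rotation_number Phi rho -> irrational rho ->
  exists d, 0 < d /\ forall Psi k c, circle_lift Psi -> is_rotation_number Psi (rho + IZR k) ->
    c < d -> (forall x, circ_dist (Phi x) (Psi x) <= c) ->
    exists m : Z, is_rotation_number (fun y => Psi y - IZR m) rho /\
                  forall x, Rabs (Psi x - IZR m - Phi x) <= c.
Proof.
  intros HPhi Hrot Hirr.
  destruct (irrational_between_integers rho Hirr) as [j Hj].
  pose proof (proj2 (displacement_between_iff Phi rho HPhi Hrot Hirr j 0) Hj) as H0.
  pose proof (Rmin_l (Phi 0 - 0 - IZR j) (IZR j + 1 - (Phi 0 - 0))).
  pose proof (Rmin_r (Phi 0 - 0 - IZR j) (IZR j + 1 - (Phi 0 - 0))).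
  set (s := Rmin (Phi 0 - 0 - IZR j) (IZR j + 1 - (Phi 0 - 0))) in *.
  exists (Rmin s (/ 2)). split; [apply Rmin_pos; [apply Rmin_pos|]; lra|].
  intros Psi k c HPsi Hk Hc Hdist.
  pose proof (Rmin_l s (/ 2)); pose proof (Rmin_r s (/ 2)).
  destruct (continuity_near_integers_const (fun x => Psi x - Phi x) c) as [m Hm].
  - apply continuity_minus; [apply HPsi|apply HPhi].
  - lra.
  - intro x. apply circ_dist_integer_gap, Hdist.
  - assert (Hclose : forall x, Rabs (Psi x - IZR m - Phi x) <= c).
    { intro x. specialize (Hm x). simpl in Hm. now replace (Psi x - IZR m - Phi x)
        with (Psi x - Phi x - IZR m) by ring. }
    assert (Hrm : is_rotation_number (fun y => Psi y - IZR m) (rho + IZR (k - m))).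
    { replace (rho + IZR (k - m)) with (rho + IZR k - IZR m) by (rewrite minus_IZR; ring).
      now apply rotation_number_shift_lift. }
    (* Psi - m, like Phi, has its displacement at 0 in (j, j + 1), hence its rotation number. *)
    assert (Hkm : (k - m)%Z = 0%Z).
    { pose proof (Rabs_le_inv _ _ (Hclose 0)).
      assert (Hb : IZR j < rho + IZR (k - m) < IZR j + 1).
      { apply (displacement_between_iff (fun y => Psi y - IZR m) _ (shift_lift Psi HPsi m) Hrm
                 (irrational_shift rho Hirr _) j 0).
        simpl. lra. }
      assert (-1 < k - m < 1)%Z by (split; apply lt_IZR; lra). lia. }
    exists m. split; [|exact Hclose].
    rewrite Hkm, Rplus_0_r in Hrm. exact Hrm.
Qed.

Lemma abs_sin_PI_shift_Z a z : Rabs (sin (PI * (a + IZR z))) = Rabs (sin (PI * a)).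
Proof.
  assert (Hper : forall x, Rabs (sin (PI * (x + 1))) = Rabs (sin (PI * x))).
  { intro x. now rewrite Rmult_plus_distr_l, Rmult_1_r, neg_sin, Rabs_Ropp. }
  exact (periodic_shift_Z (fun x => Rabs (sin (PI * x))) Hper z a).
Qed.

Lemma sin_PI_mult_neq0 a j : IZR j < a < IZR j + 1 -> sin (PI * a) <> 0.
Proof.
  intros H E. apply sin_eq_0_0 in E. destruct E as [k Hk].
  pose proof PI_RGT_0.
  assert (a = IZR k) by nra. subst.
  destruct H as [H1 H2]. apply lt_IZR in H1. rewrite <- plus_IZR in H2. apply lt_IZR in H2. lia.
Qed.

Lemma displacement_sin_lower_bound Phi rho :
  circle_lift Phi -> is_rotation_number Phi rho -> irrational rho ->
  exists S0, 0 < S0 /\ forall y, S0 <= Rabs (sin (PI * (Phi y - y))).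
Proof.
  intros HPhi Hrot Hirr.
  destruct (irrational_between_integers rho Hirr) as [j Hj].
  destruct (periodic_continuity_min (fun y => Rabs (sin (PI * (Phi y - y))))) as [y0 Hy0].
  - intro y. apply (continuity_comp _ Rabs); [|apply Rcontinuity_abs].
    apply (continuity_comp _ sin); [|apply continuity_sin].
    apply continuity_scal, continuity_minus; [apply HPhi|apply derivable_continuous, derivable_id].
  - intro y. simpl. destruct HPhi as [_ [_ Hp]]. rewrite Hp. f_equal. f_equal. f_equal. ring.
  - exists (Rabs (sin (PI * (Phi y0 - y0)))). split; [|exact Hy0].
    apply Rabs_pos_lt, (sin_PI_mult_neq0 _ j).
    now apply (displacement_between_iff Phi rho HPhi Hrot Hirr).
Qed.

Lemma radius_succ L n x0 :
  radius L (S n) x0 = / 2 * / Rabs (sin (PI * (L (iter L n x0) - iter L n x0))).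
Proof.
  unfold radius. replace (S n - 1)%nat with n by lia. now rewrite Rabs_inv.
Qed.

Lemma radius_shift_lift Psi m n x0 : circle_lift Psi ->
  radius (fun y => Psi y - IZR m) (S n) x0 = radius Psi (S n) x0.
Proof.
  intros HPsi. rewrite !radius_succ, (iter_shift_lift Psi HPsi).
  set (Y := iter Psi n x0).
  replace (Y - INR n * IZR m) with (Y + IZR (- (Z.of_nat n * m)))
    by (rewrite opp_IZR, mult_IZR, <- INR_IZR_INZ; ring).
  rewrite (lift_shift_Z Psi HPsi), <- (abs_sin_PI_shift_Z (Psi Y - Y) (- m)), !opp_IZR.
  do 4 f_equal. ring.
Qed.

Lemma sin_lipschitz u v : Rabs (sin u - sin v) <= Rabs (u - v).
Proof.
  destruct (MVT_abs sin cos v u (fun c _ => derivable_pt_lim_sin c)) as [c [E _]].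
  rewrite E. pose proof (Rabs_pos (u - v)).
  assert (Rabs (cos c) <= 1) by (apply Rabs_le, COS_bound). nra.
Qed.

Lemma Rinv_lipschitz A B S0 : 0 < S0 -> S0 <= A -> Rabs (A - B) <= S0 / 2 ->
  Rabs (/ A - / B) <= 2 * Rabs (A - B) / S0 ^ 2.
Proof.
  intros HS HA HAB. pose proof (Rabs_le_inv _ _ HAB).
  assert (E : / A - / B = (B - A) * / (A * B)) by (field; lra).
  rewrite E, Rabs_mult, Rabs_inv, Rabs_minus_sym, (Rabs_pos_eq (A * B)) by nra.
  assert (Hinv : / (A * B) <= / (S0 ^ 2 / 2)) by (apply Rinv_le_contravar; simpl; nra).
  replace (/ (S0 ^ 2 / 2)) with (2 * / S0 ^ 2) in Hinv by (field; lra).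
  pose proof (Rabs_pos (A - B)). unfold Rdiv. nra.
Qed.

Lemma half_inv_abs_sin_unif_cont S0 eps : 0 < S0 -> 0 < eps ->
  exists tau, 0 < tau /\ forall a b, S0 <= Rabs (sin (PI * a)) -> Rabs (a - b) < tau ->
    Rabs (/ 2 * / Rabs (sin (PI * a)) - / 2 * / Rabs (sin (PI * b))) < eps.
Proof.
  intros HS He. pose proof PI_RGT_0.
  pose proof (Rmin_l (S0 / 2) (eps * S0 ^ 2)); pose proof (Rmin_r (S0 / 2) (eps * S0 ^ 2)).
  set (t := Rmin (S0 / 2) (eps * S0 ^ 2)) in *.
  assert (Ht : 0 < t) by (apply Rmin_pos; [lra|apply Rmult_lt_0_compat; [lra|apply pow_lt; lra]]).
  exists (t / PI). split; [apply Rdiv_lt_0_compat; lra|]. intros a b Ha Hab.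
  set (A := Rabs (sin (PI * a))) in *. set (B := Rabs (sin (PI * b))).
  assert (HAB : Rabs (A - B) < t).
  { apply (Rle_lt_trans _ (Rabs (PI * a - PI * b))).
    - apply (Rle_trans _ _ _ (Rabs_triang_inv2 _ _)), sin_lipschitz.
    - rewrite <- Rmult_minus_distr_l, Rabs_mult, (Rabs_pos_eq PI) by lra.
      apply (Rmult_lt_compat_l PI) in Hab; [|lra].
      replace (PI * (t / PI)) with t in Hab by (field; lra). exact Hab. }
  pose proof (Rinv_lipschitz A B S0 HS Ha ltac:(lra)).
  rewrite <- Rmult_minus_distr_l, Rabs_mult, (Rabs_pos_eq (/ 2)) by lra.
  assert (2 * Rabs (A - B) / S0 ^ 2 < 2 * eps).
  { apply (Rmult_lt_reg_r (S0 ^ 2)); [apply pow_lt; lra|].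
    replace (2 * Rabs (A - B) / S0 ^ 2 * S0 ^ 2) with (2 * Rabs (A - B))
      by (field; lra). lra. }
  lra.
Qed.
Theorem proposition5p7 :
  forall (Phi : R -> R) (rho eps : R),
    circle_lift Phi -> minimal Phi ->
    is_rotation_number Phi rho -> irrational rho ->
    0 < eps ->
    exists delta, 0 < delta /\
      forall Psi : R -> R,
        circle_lift Psi -> minimal Psi ->
        (exists k : Z, is_rotation_number Psi (rho + IZR k)) ->
        C0_close Phi Psi delta ->
        exists c, c < eps /\
          forall (x0 : R) (n : nat), (1 <= n)%nat ->
            Rabs (radius Phi n x0 - radius Psi n x0) <= c.
Proof.
  intros Phi rho eps HPhi Hmin Hrot Hirr Heps.
  destruct (displacement_sin_lower_bound Phi rho HPhi Hrot Hirr) as [S0 [HS0 Hsin]].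
  destruct (half_inv_abs_sin_unif_cont S0 (eps / 2) HS0) as [tau [Htau Hrad]]; [lra|].
  destruct (lift_unif_cont Phi HPhi (tau / 3)) as [eta [Heta Hcont]]; [lra|].
  destruct (iter_close_same_rotation Phi rho (Rmin eta (tau / 3)) HPhi Hrot Hirr Hmin)
    as [d1 [Hd1 Hshadow]]; [apply Rmin_pos; lra|].
  destruct (C0_close_same_rotation Phi rho HPhi Hrot Hirr) as [d2 [Hd2 Hnorm]].
  pose proof (Rmin_l eta (tau / 3)); pose proof (Rmin_r eta (tau / 3)).
  pose proof (Rmin_l d1 d2); pose proof (Rmin_r d1 d2).
  pose proof (Rmin_l (Rmin d1 d2) (tau / 3)); pose proof (Rmin_r (Rmin d1 d2) (tau / 3)).
  exists (Rmin (Rmin d1 d2) (tau / 3)). split; [repeat apply Rmin_pos; lra|].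
  intros Psi HPsi _ [k Hk] [c [Hc Hdist]].
  destruct (Hnorm Psi k c HPsi Hk ltac:(lra) Hdist) as [m [Hrm Hclose]].
  exists (eps / 2). split; [lra|]. intros x0 [|n] Hn; [lia|].
  rewrite <- (radius_shift_lift Psi m n x0 HPsi), !radius_succ. left.
  set (Psi' := fun y => Psi y - IZR m) in *.
  set (y := iter Phi n x0). set (y' := iter Psi' n x0).
  assert (Hyy : Rabs (y' - y) < Rmin eta (tau / 3)).
  { apply (Hshadow Psi' (shift_lift Psi HPsi m) Hrm).
    intro x. apply (Rle_lt_trans _ c); [apply Hclose|lra]. }
  apply Hrad; [apply Hsin|].
  assert (Hphi : Rabs (Phi y' - Phi y) < tau / 3) by (apply Hcont; lra).
  pose proof (Rabs_le_inv _ _ (Hclose y')). apply Rabs_def2 in Hyy, Hphi.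
  unfold Psi'. apply Rabs_def1; lra.
Qed.
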